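(* Let $M$ be a fixed positive integer and let $A\in[0,1]$ be a random variable. Suppose there is a constant $\delta\ge0$ such that $\mathbb P(A\le\alpha)\le\alpha+\delta$ for every $\alpha\in(0,1)$. Let $B$ be a random variable such that, conditional on $A$, $B\sim\mathrm{Binom}(M,A)$, and let $R=\frac{1+B}{1+M}$. Then $\mathbb P(R\le\alpha)\le\alpha+\delta$ for every $\alpha\in(0,1)$. *)

From HB Require Import structures.
From mathcomp Require Import all_boot all_order all_algebra.
From mathcomp Require Import all_classical all_reals all_analysis.
Set Implicit Arguments. Unset Strict Implicit. Unset Printing Implicit Defensive.
Import Order.TTheory GRing.Theory Num.Theory.
Local Open Scope classical_set_scope.
Local Open Scope ring_scope.

Definition binom_pmf (R : realType) (M : nat) (a : R) (k : nat) : R :=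
  ('C(M, k))%:R * a ^+ k * (1 - a) ^+ (M - k).

(* "Conditional on A, B ~ Binom(M, A)": for every Borel set S and every k,
   P(A in S, B = k) = E[ 1_{A in S} * binom_pmf M A k ]. *)
Definition cond_binomial d (T : measurableType d) (R : realType)
  (P : probability T R) (M : nat) (A : T -> R) (B : T -> nat) : Prop :=
  forall (S : set R) (k : nat), measurable S ->
    P (A @^-1` S `&` [set t | B t = k]) =
    (\int[P]_(t in A @^-1` S) (binom_pmf M (A t) k)%:E)%E.

From HB Require Import structures.
From mathcomp Require Import all_boot all_order all_algebra.
From mathcomp Require Import all_classical all_reals all_analysis.
From mathcomp Require Import measurable_realfun ring lra polyrcf.
Import Order.TTheory GRing.Theory Num.Theory.
Local Open Scope classical_set_scope.
Local Open Scope ring_scope.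

(* Write F(a) = P(Binom(M, a) < m). Then {R <= alpha} = {B < m} for
   m = floor(alpha (M + 1)), and P(B < m) = E[F(A)]. Since F decreases from
   1 to 0 on [0, 1], E[F(A)] = int_0^1 P(A < u) d(-F)(u)
   <= int_0^1 (u + delta) d(-F)(u) = m / (M + 1) + delta <= alpha + delta,
   the last integral being computed from the classical identity
   int_0^1 u d(-F)(u) = m / (M + 1). The Stieltjes integrals are replaced by
   Riemann-Stieltjes sums on the grid i / N, which cost an error 1 / N. *)

Section BinomialTail.
Variable R : realType.

Definition bernstein (n k : nat) : {poly R} :=
  'C(n, k)%:R *: ('X ^+ k * (1 - 'X) ^+ (n - k)).

Definition binom_lt (n m : nat) : {poly R} := \sum_(k < m) bernstein n k.

Lemma horner_bernstein n k a : (bernstein n k).[a] = binom_pmf n a k.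
Proof. by rewrite /bernstein /binom_pmf !hornerE. Qed.

Lemma horner_binom_lt n m a : (binom_lt n m).[a] = \sum_(k < m) binom_pmf n a k.
Proof. by rewrite /binom_lt horner_sum; apply: eq_bigr => k _; rewrite horner_bernstein. Qed.

Lemma binom_pmf_ge0 n (a : R) k : 0 <= a <= 1 -> 0 <= binom_pmf n a k.
Proof. by case/andP=> a0 a1; rewrite /binom_pmf !mulr_ge0 ?exprn_ge0 ?subr_ge0. Qed.

Lemma binom_lt_at0 n j : (binom_lt n j.+1).[0] = 1.
Proof.
rewrite horner_binom_lt big_ord_recl big1 ?addr0 => [|i _].
  by rewrite /binom_pmf bin0 !expr0 subr0 expr1n !mulr1.
by rewrite /binom_pmf expr0n mulr0 mul0r.
Qed.

Lemma binom_lt_at1 n m : (m <= n)%N -> (binom_lt n m).[1] = 0.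
Proof.
move=> mn; rewrite horner_binom_lt big1 // => i _.
by rewrite /binom_pmf subrr expr0n subn_eq0 leqNgt (leq_trans (ltn_ord i) mn) mulr0.
Qed.

Lemma deriv_bernstein n k : (k <= n)%N ->
  (bernstein n.+1 k.+1)^`() = n.+1%:R *: (bernstein n k - bernstein n k.+1).
Proof.
move=> kn; rewrite /bernstein derivZ derivM derivXn deriv_exp derivB derivC derivX.
rewrite sub0r subSS subnS -!mul_polyC !polyC_natr.
have diag : 'C(n.+1, k.+1)%:R * k.+1%:R = n.+1%:R * 'C(n, k)%:R :> {poly R}.
  by rewrite -!natrM mul_bin_diag mulnC.
have down : 'C(n.+1, k.+1)%:R * (n - k)%:R = n.+1%:R * 'C(n, k.+1)%:R :> {poly R}.
  by rewrite -!natrM mul_bin_down subSS mulnC.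
set U := (1 - 'X) ^+ (n - k).-1.
transitivity ('C(n.+1, k.+1)%:R * k.+1%:R * ('X ^+ k * (1 - 'X) ^+ (n - k))
  - 'C(n.+1, k.+1)%:R * (n - k)%:R * ('X ^+ k.+1 * U) : {poly R}); first by ring.
by rewrite diag down; ring.
Qed.

Lemma deriv_binom_lt n j : (j <= n)%N ->
  (binom_lt n.+1 j.+1)^`() = - (n.+1%:R *: bernstein n j).
Proof.
elim: j => [|j IH] jn.
  rewrite /binom_lt big_ord1 /bernstein derivZ derivM derivXn deriv_exp derivB.
  by rewrite derivC derivX sub0r !bin0 !subn0 -!mul_polyC !polyC_natr /=; ring.
rewrite /binom_lt big_ord_recr derivD -/(binom_lt n.+1 j.+1) IH ?(ltnW jn) //.
by rewrite deriv_bernstein ?(ltnW jn) // scalerBr addKr.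
Qed.

Lemma mulX_bernstein n j :
  'X * (n.+1%:R *: bernstein n j) = j.+1%:R *: bernstein n.+1 j.+1.
Proof.
rewrite /bernstein subSS -!mul_polyC !polyC_natr exprS.
have diag : n.+1%:R * 'C(n, j)%:R = j.+1%:R * 'C(n.+1, j.+1)%:R :> {poly R}.
  by rewrite -!natrM mul_bin_diag.
transitivity (n.+1%:R * 'C(n, j)%:R * ('X * ('X ^+ j * (1 - 'X) ^+ (n - j)))
  : {poly R}); first by ring.
by rewrite diag; ring.
Qed.

Lemma binom_lt_nonincreasing n j (u v : R) : (j <= n)%N ->
  0 <= u -> u <= v -> v <= 1 -> (binom_lt n.+1 j.+1).[v] <= (binom_lt n.+1 j.+1).[u].
Proof.
move=> jn u0 uv v1; rewrite -lerN2 -!hornerN.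
apply: (@ler_hornerW _ 0 1) => //; rewrite ?in_itv /= ?u0 ?v1 ?(le_trans u0 uv) //.
  move=> x; rewrite in_itv /= => /andP[x0 x1].
  rewrite derivN deriv_binom_lt // opprK hornerZ horner_bernstein.
  by rewrite mulr_ge0 ?binom_pmf_ge0 ?ltW ?x0.
by rewrite (le_trans uv v1).
Qed.

(* With F := binom_lt n.+1 j.+1, the derivative of this polynomial is 'X * (- F'),
   so its increments are the integrals int_u^v x d(-F)(x); its total increment
   over [0, 1] is the first moment (j + 1) / (n + 2) of the measure d(-F). *)
Definition binom_lt_moment n j : {poly R} :=
  (j.+1%:R / n.+2%:R) *: (1 - binom_lt n.+2 j.+2).

Lemma deriv_binom_lt_moment n j : (j <= n)%N ->
  (binom_lt_moment n j)^`() = 'X * (n.+1%:R *: bernstein n j).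
Proof.
move=> jn; rewrite mulX_bernstein /binom_lt_moment derivZ derivB derivC sub0r.
by rewrite deriv_binom_lt // opprK scalerA mulfVK // pnatr_eq0.
Qed.

Lemma binom_lt_decrement_le_moment n j (u v : R) : (j <= n)%N ->
  0 <= u -> u <= v -> v <= 1 ->
  ((binom_lt n.+1 j.+1).[u] - (binom_lt n.+1 j.+1).[v]) * u
    <= (binom_lt_moment n j).[v] - (binom_lt_moment n j).[u].
Proof.
move=> jn u0 uv v1.
pose G := binom_lt_moment n j + u *: binom_lt n.+1 j.+1.
have : G.[u] <= G.[v].
  apply: (@ler_hornerW _ u v); rewrite ?in_itv /= ?lexx ?uv //.
  move=> x; rewrite in_itv /= => /andP[ux xv]; have x01 : 0 <= x <= 1.
    by rewrite (le_trans u0 (ltW ux)) (le_trans (ltW xv) v1).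
  rewrite /G derivD deriv_binom_lt_moment // derivZ deriv_binom_lt // scalerN.
  rewrite -[u *: _]mul_polyC -mulrBl hornerM hornerXsubC hornerZ horner_bernstein.
  by rewrite mulr_ge0 ?subr_ge0 ?(ltW ux) // mulr_ge0 ?binom_pmf_ge0.
by rewrite /G !hornerD !(hornerZ u) mulrBl ![_ * u]mulrC; lra.
Qed.

Lemma binom_lt_grid_sum_le n j N (delta : R) : (j <= n)%N -> (0 < N)%N ->
  \sum_(i < N) (((binom_lt n.+1 j.+1).[i%:R / N%:R]
                 - (binom_lt n.+1 j.+1).[i.+1%:R / N%:R]) * (i.+1%:R / N%:R + delta))
    <= j.+1%:R / n.+2%:R + N%:R^-1 + delta.
Proof.
move=> jn N0.
pose F a := (binom_lt n.+1 j.+1).[a]; pose x i := i%:R / N%:R : R.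
change (\sum_(i < N) (F (x i) - F (x i.+1)) * (x i.+1 + delta)
  <= j.+1%:R / n.+2%:R + N%:R^-1 + delta).
have xN : x N = 1 by rewrite /x divff // pnatr_eq0 -lt0n.
have x0 : x 0%N = 0 by rewrite /x mul0r.
have xS i : x i.+1 = x i + N%:R^-1 by rewrite /x -addn1 natrD mulrDl mul1r.
have x01 i : (i <= N)%N -> 0 <= x i <= 1.
  by move=> iN; rewrite /x divr_ge0 //= ler_pdivrMr ?ltr0n // mul1r ler_nat.
have telescope (f : nat -> R) : \sum_(i < N) (f i.+1 - f i) = f N - f 0%N.
  by rewrite -(big_mkord xpredT (fun i => f i.+1 - f i)) telescope_sumr.
have total : \sum_(i < N) (F (x i) - F (x i.+1)) = 1.
  rewrite (eq_bigr (fun i : 'I_N => - F (x i.+1) - - F (x i))); last first.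
    by move=> i _; rewrite opprK addrC.
  rewrite (telescope (fun i => - F (x i))) xN x0 /F binom_lt_at1 // binom_lt_at0.
  by rewrite oppr0 sub0r opprK.
have mean : \sum_(i < N) (F (x i) - F (x i.+1)) * x i <= j.+1%:R / n.+2%:R.
  apply: le_trans (_ : \sum_(i < N) ((binom_lt_moment n j).[x i.+1]
                                     - (binom_lt_moment n j).[x i]) <= _).
    apply: ler_sum => i _; have /andP[u0 _] := x01 i (ltnW (ltn_ord i)).
    have /andP[_ v1] := x01 i.+1 (ltn_ord i).
    by apply: binom_lt_decrement_le_moment; rewrite // xS lerDl invr_ge0.
  rewrite (telescope (fun i => (binom_lt_moment n j).[x i])) xN x0.
  rewrite /binom_lt_moment !hornerE binom_lt_at1 ?ltnS // binom_lt_at0.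
  by rewrite subr0 subrr mulr0 subr0 mulr1.
rewrite (eq_bigr (fun i : 'I_N => (F (x i) - F (x i.+1)) * x i
                        + (F (x i) - F (x i.+1)) * (N%:R^-1 + delta))); last first.
  by move=> i _; rewrite xS -mulrDr addrA.
by rewrite big_split /= -mulr_suml total mul1r addrA lerD2r lerD2r.
Qed.

End BinomialTail.

Arguments binom_lt {R} n m.

Lemma nonincreasing_le_grid_sum {R : realType} (F : R -> R) (x : nat -> R) (a : R) k :
  (forall u v, 0 <= u -> u <= v -> v <= 1 -> F v <= F u) ->
  (forall i, (i <= k)%N -> 0 <= x i <= 1) ->
  (forall i, (i < k)%N -> x i <= x i.+1) ->
  x 0%N <= a -> a <= 1 ->
  F a - F (x k) <= \sum_(i < k) (F (x i) - F (x i.+1)) * (a < x i.+1)%R%:R.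
Proof.
move=> Fdecr x01 xincr xa a1.
have a0 : 0 <= a by case/andP: (x01 0%N isT) => x0 _; apply: le_trans xa.
elim: k x01 xincr => [|k IH] x01 xincr.
  by rewrite big_ord0 subr_le0; case/andP: (x01 0%N isT) => x0 _; apply: Fdecr.
rewrite big_ord_recr /=; have [ax|xa'] := ltP a (x k.+1).
  have -> : F a - F (x k.+1) = F a - F (x k) + (F (x k) - F (x k.+1)).
    by rewrite addrA subrK.
  rewrite mulr1 lerD //.
  exact: IH (fun i ik => x01 i (leqW ik)) (fun i ik => xincr i (ltnW ik)).
rewrite mulr0 addr0; apply: (@le_trans _ _ 0).
  by rewrite subr_le0; case/andP: (x01 k.+1 (leqnn _)) => x0 _; apply: Fdecr.
apply: sumr_ge0 => i _; rewrite mulr_ge0 ?ler0n // subr_ge0.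
have /andP[u0 _] := x01 i (leqW (ltnW (ltn_ord i))).
have /andP[_ v1] := x01 i.+1 (ltnW (ltn_ord i)).
exact: Fdecr (xincr i (leqW (ltn_ord i))) v1.
Qed.

Section ConditionalBinomial.
Context d (T : measurableType d) (R : realType) (P : probability T R).
Variables (A : T -> R) (B : T -> nat) (n : nat) (delta : R).
Hypotheses (mA : measurable_fun setT A) (mB : forall k, measurable [set t | B t = k]).
Hypothesis A01 : forall t, 0 <= A t <= 1.
Hypothesis delta_ge0 : 0 <= delta.
Hypothesis A_superuniform : forall alpha : R, 0 < alpha < 1 ->
  (P [set t | (A t <= alpha)%R] <= (alpha + delta)%:E)%E.
Hypothesis B_binomial : cond_binomial P n.+1 A B.

Lemma setB_ltSU m :
  [set t | (B t < m.+1)%N] = [set t | (B t < m)%N] `|` [set t | B t = m].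
Proof.
have ltnS_eqV t : (B t < m.+1)%N = (B t < m)%N || (B t == m).
  by rewrite ltnS leq_eqVlt orbC.
apply/seteqP; split => t /=; rewrite ltnS_eqV.
  by case/orP => [->|/eqP->]; [left|right].
by case => [->|->]; rewrite ?eqxx ?orbT.
Qed.

Lemma measurable_B_lt m : measurable [set t | (B t < m)%N].
Proof.
elim: m => [|m IH]; last by rewrite setB_ltSU; apply: measurableU.
by rewrite (_ : [set t | _] = set0) //; apply/seteqP; split.
Qed.

Lemma measurable_A_lt (b : R) : measurable [set t | A t < b].
Proof.
have := mA measurableT _ (measurable_itv `]-oo, b[); rewrite setTI.
by congr measurable; apply/seteqP; split => t /=; rewrite in_itv.
Qed.

Lemma measurable_A_le (b : R) : measurable [set t | A t <= b].
Proof.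
have := mA measurableT _ (measurable_itv `]-oo, b]); rewrite setTI.
by congr measurable; apply/seteqP; split => t /=; rewrite in_itv.
Qed.

Lemma prob_B_lt m :
  P [set t | (B t < m)%N] = (\int[P]_t ((binom_lt n.+1 m).[A t])%:E)%E.
Proof.
have prob_B_eq k : P [set t | B t = k] = (\int[P]_t ((bernstein R n.+1 k).[A t])%:E)%E.
  have := B_binomial setT k measurableT; rewrite preimage_setT setTI => ->.
  by apply: eq_integral => t _; rewrite horner_bernstein.
under eq_integral do rewrite horner_sum -sumEFin.
rewrite ge0_integral_sum // => [|k|k t _]; last 2 first.
- apply/measurable_EFinP.
  exact: measurableT_comp (continuous_measurable_fun (@continuous_horner _ _)) mA.
- by rewrite lee_fin horner_bernstein binom_pmf_ge0.
elim: m => [|m IH].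
  by rewrite big_ord0 (_ : [set t | _] = set0) ?measure0 //; apply/seteqP; split.
rewrite big_ord_recr /= -IH -prob_B_eq setB_ltSU measureU //.
- exact: measurable_B_lt.
- by apply/seteqP; split => t //= [/[swap] ->]; rewrite ltnn.
Qed.

Lemma prob_A_lt_le alpha : 0 < alpha <= 1 ->
  (P [set t | (A t < alpha)%R] <= (alpha + delta)%:E)%E.
Proof.
case/andP=> a0; rewrite le_eqVlt => /orP[/eqP->|a1].
  by apply: le_trans (probability_le1 _ (measurable_A_lt _)) _; rewrite lee_fin lerDl.
apply: le_trans (A_superuniform _ _); last by rewrite a0.
apply: le_measure; rewrite ?inE; [exact: measurable_A_lt|exact: measurable_A_le|].
by move=> t /ltW.
Qed.

Lemma integral_le_grid_sum (F : R -> R) N :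
  measurable_fun setT F ->
  (forall u v, 0 <= u -> u <= v -> v <= 1 -> F v <= F u) ->
  F 1 = 0 -> (0 < N)%N ->
  (\int[P]_t (F (A t))%:E <=
   (\sum_(i < N) (F (i%:R / N%:R) - F (i.+1%:R / N%:R)) * (i.+1%:R / N%:R + delta))%:E)%E.
Proof.
move=> mF Fdecr F1 N0; pose x i := i%:R / N%:R : R.
pose c i := F (x i) - F (x i.+1); pose S i := [set t | A t < x i.+1].
change (\int[P]_t (F (A t))%:E <= (\sum_(i < N) c i * (x i.+1 + delta))%:E)%E.
have x01 i : (i <= N)%N -> 0 <= x i <= 1.
  by move=> iN; rewrite /x divr_ge0 //= ler_pdivrMr ?ltr0n // mul1r ler_nat.
have xincr i : x i <= x i.+1 by rewrite /x ler_pM2r ?invr_gt0 ?ltr0n // ler_nat.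
have c_ge0 (i : 'I_N) : 0 <= c i.
  have /andP[u0 _] := x01 i (ltnW (ltn_ord i)); have /andP[_ v1] := x01 i.+1 (ltn_ord i).
  by rewrite subr_ge0 Fdecr.
have mS i : measurable (S i) by apply: measurable_A_lt.
have mstep i : measurable_fun setT (fun t => c i * \1_(S i) t).
  by apply: measurable_funM => //; apply: measurable_indic.
have indicS i t : \1_(S i) t = (A t < x i.+1)%R%:R :> R.
  rewrite indicE; case: (boolP (A t < x i.+1)) => h.
    by rewrite mem_set.
  by rewrite memNset //; apply/negP.
(* Dominate F o A by a step function, whose integral is sum_i c i * P (S i). *)
apply: (@le_trans _ _ (\int[P]_t (\sum_(i < N) (c i * \1_(S i) t))%:E)%E).
  apply: ge0_le_integral => //.
  - move=> t _; rewrite lee_fin -F1; case/andP: (A01 t) => a0 a1; exact: Fdecr.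
  - by apply/measurable_EFinP; apply: measurableT_comp mF mA.
  - by apply/measurable_EFinP; apply: measurable_sum.
  - move=> t _; rewrite lee_fin; under eq_bigr do rewrite indicS.
    have := @nonincreasing_le_grid_sum _ F x (A t) N Fdecr x01 (fun i _ => xincr i).
    have xN : x N = 1 by rewrite /x divff // pnatr_eq0 -lt0n.
    by rewrite xN F1 subr0 /x mul0r; case/andP: (A01 t) => a0 a1; apply.
under eq_integral do rewrite -sumEFin.
rewrite ge0_integral_sum // => [|i|i t _]; last 2 first.
- exact/measurable_EFinP.
- by rewrite lee_fin mulr_ge0 // indicE.
rewrite -sumEFin; apply: lee_sum => i _; under eq_integral do rewrite EFinM.
rewrite ge0_integralZl_EFin // ?integral_indic ?setIT ?EFinM //; last first.
  by apply/measurable_EFinP; apply: measurable_indic.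
apply: lee_wpmul2l; first by rewrite lee_fin.
apply: prob_A_lt_le; rewrite /x divr_gt0 ?ltr0n //= ler_pdivrMr ?ltr0n // mul1r.
by rewrite ler_nat.
Qed.

Lemma prob_B_lt_le j : (j <= n)%N ->
  (P [set t | (B t < j.+1)%N] <= (j.+1%:R / n.+2%:R + delta)%:E)%E.
Proof.
move=> jn; apply/lee_addgt0Pr => e e0; pose N := (Num.truncn e^-1).+1.
have invN_lt : N%:R^-1 < e.
  by rewrite -[e]invrK ltf_pV2 ?posrE ?invr_gt0 ?ltr0n // -truncn_le_nat.
rewrite prob_B_lt; apply: le_trans.
  apply: (integral_le_grid_sum (fun a => (binom_lt n.+1 j.+1).[a]) N) => //.
- exact: continuous_measurable_fun (@continuous_horner _ _).
- by move=> u v; apply: binom_lt_nonincreasing.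
- exact: binom_lt_at1.
rewrite -EFinD lee_fin; apply: le_trans; first exact: binom_lt_grid_sum_le.
by rewrite -addrA [N%:R^-1 + _]addrC addrA lerD2l ltW.
Qed.

End ConditionalBinomial.

Arguments prob_B_lt_le {d T R P A B n delta}.

Lemma ratio_le_iff_lt_trunc {R : realType} (M b : nat) (alpha : R) : 0 <= alpha ->
  ((1 + b)%:R / (1 + M)%:R <= alpha) = (b < Num.truncn (alpha * (1 + M)%:R))%N.
Proof. by move=> a0; rewrite ler_pdivrMr ?ltr0n // -truncn_ge_nat ?mulr_ge0. Qed.

Theorem lemmaA1 (d : measure_display) (T : measurableType d) (R : realType)
  (P : probability T R) (M : nat) (A : T -> R) (B : T -> nat) (delta : R) :
  (0 < M)%N ->
  measurable_fun setT A ->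
  (forall k : nat, measurable [set t | B t = k]) ->
  (forall t, 0 <= A t <= 1) ->
  0 <= delta ->
  (forall alpha : R, 0 < alpha < 1 ->
     (P [set t | (A t <= alpha)%R] <= (alpha + delta)%:E)%E) ->
  cond_binomial P M A B ->
  forall alpha : R, 0 < alpha < 1 ->
    (P [set t | ((1 + B t)%:R / (1 + M)%:R <= alpha)%R] <= (alpha + delta)%:E)%E.
Proof.
case: M => [//|n] _ mA mB A01 delta_ge0 A_superuniform B_binomial alpha /andP[a0 a1].
have -> : [set t | (1 + B t)%:R / (1 + n.+1)%:R <= alpha] =
          [set t | (B t < Num.truncn (alpha * (1 + n.+1)%:R))%N].
  by apply/seteqP; split => t /=; rewrite ratio_le_iff_lt_trunc ?ltW.
have : (Num.truncn (alpha * (1 + n.+1)%:R) <= n.+1)%N.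
  by rewrite truncn_le_nat -add1n mulrC gtr_pMr ?ltr0n.
have : (Num.truncn (alpha * (1 + n.+1)%:R))%:R <= alpha * (1 + n.+1)%:R.
  by rewrite -truncn_ge_nat ?mulr_ge0 ?ltW.
case: (Num.truncn _) => [_ _|j m_le_alpha m_le_M].
  rewrite (_ : [set t | _] = set0); last by apply/seteqP; split.
  by rewrite measure0 lee_fin addr_ge0 // ltW.
apply: le_trans.
  exact: prob_B_lt_le mA mB A01 delta_ge0 A_superuniform B_binomial _ m_le_M.
by rewrite lee_fin lerD2r ler_pdivrMr ?ltr0n.
Qed.
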